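(* Let $\mathbb{H}^n$ be $\mathbb{R}^n$ or $\mathbb{C}^n$. The family of all $m$-element frames on $\mathbb{H}^n$ that are injective is open in the space of all $m$-element frames on $\mathbb{H}^n$, with respect to the distance $d$.
   Context: A family $\{x_k\}$ of vectors in a Hilbert space is called injective if whenever a self-adjoint operator $T$ satisfies $\langle Tx_k,x_k\rangle=0$ for all $k$, then $T=0$. For $m$-element frames $\mathcal{X}=\{x_k\}_{k=1}^m$ and $\mathcal{Y}=\{y_k\}_{k=1}^m$, the distance is $d(\mathcal{X},\mathcal{Y})^2=\sum_{k=1}^m\|x_k-y_k\|^2$. *)

From HB Require Import structures.
From mathcomp Require Import all_boot all_order all_algebra.
From mathcomp Require Import reals.
From mathcomp Require Import complex.
Set Implicit Arguments. Unset Strict Implicit. Unset Printing Implicit Defensive.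
Import Order.TTheory GRing.Theory Num.Theory.
Local Open Scope ring_scope.

Section FrameDefs.
(* K is the scalar field (R or C), conj its conjugation (id for R). *)
Variables (K : numFieldType) (conj : K -> K).

Definition inner (n : nat) (u v : 'cV[K]_n) : K := \sum_(i < n) u i 0 * conj (v i 0).

Definition norm2 (n : nat) (u : 'cV[K]_n) : K := \sum_(i < n) `|u i 0| ^+ 2.

Definition adjmx (n : nat) (T : 'M[K]_n) : 'M[K]_n := (map_mx conj T)^T.

Definition is_frame (n m : nat) (X : 'I_m -> 'cV[K]_n) : Prop :=
  exists A B : K, [/\ 0 < A, A <= B &
    forall x : 'cV[K]_n,
      A * norm2 x <= \sum_(k < m) `|inner x (X k)| ^+ 2 <= B * norm2 x].

Definition injective_family (n m : nat) (X : 'I_m -> 'cV[K]_n) : Prop :=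
  forall T : 'M[K]_n, adjmx T = T ->
    (forall k, inner (T *m X k) (X k) = 0) -> T = 0.

Definition frame_dist2 (n m : nat) (X Y : 'I_m -> 'cV[K]_n) : K :=
  \sum_(k < m) norm2 (X k - Y k).

Definition injective_frames_open (n m : nat) : Prop :=
  forall X : 'I_m -> 'cV[K]_n, is_frame X -> injective_family X ->
    exists eps : K, 0 < eps /\
      forall Y : 'I_m -> 'cV[K]_n, is_frame Y -> frame_dist2 X Y < eps ^+ 2 ->
        injective_family Y.

End FrameDefs.

From HB Require Import structures.
From mathcomp Require Import all_boot all_order all_algebra.
From mathcomp Require Import reals.
From mathcomp Require Import complex.
From mathcomp Require Import ring.
Set Implicit Arguments. Unset Strict Implicit. Unset Printing Implicit Defensive.
Import Order.TTheory GRing.Theory Num.Theory.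
Local Open Scope ring_scope.

(* Encode S |-> (<S x_k, x_k>)_k as a matrix A_X acting on vectorised n x n
   matrices. Over both fields there is a fixed matrix P that acts on self-adjoint
   matrices as a nonzero scalar a and whose kernel contains that of A_X as soon as
   X is injective: P = (S |-> S + S^T) over R, and P = 1 over C, where every S is
   H + iH' with H, H' self-adjoint. Hence P = A_X B for some B. For Y near X the
   matrix A_Y is entrywise near A_X, and a self-adjoint T with vec T A_Y = 0
   satisfies a vec T = vec T (A_X - A_Y) B, a vector whose entries are too small
   compared with those of vec T unless T = 0. *)

Lemma mulmx_factor_ker (F : fieldType) (N m p : nat) (A : 'M[F]_(N, m)) (P : 'M[F]_(N, p)) :
  (forall u : 'rV_N, u *m A = 0 -> u *m P = 0) -> exists B, P = A *m B.
Proof.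
move=> kerAP.
have /submxP[D PTD] : (P^T <= A^T)%MS.
  rewrite submxE; apply/eqP/trmx_inj; rewrite trmx_mul trmx0 trmxK.
  apply/row_matrixP => i; rewrite row_mul row0; apply: kerAP.
  by rewrite -row_mul -[X in _ *m X]trmxK -trmx_mul mulmx_coker trmx0 row0.
by exists D^T; rewrite -[P]trmxK PTD trmx_mul trmxK.
Qed.

Lemma normr_le_sum2 (K : numDomainType) (I J : finType) (F : I -> J -> K) i j :
  `|F i j| <= \sum_i' \sum_j' `|F i' j'|.
Proof.
apply: le_trans (_ : \sum_j' `|F i j'| <= _).
  by rewrite (bigD1 j) //= lerDl sumr_ge0.
by rewrite (bigD1 i) //= lerDl sumr_ge0 // => i' _; rewrite sumr_ge0.
Qed.

Lemma eigen_small_mx_eq0 (K : numDomainType) (N : nat) (u : 'rV[K]_N) (D : 'M[K]_N)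
    (a d : K) :
  u *m D = a *: u -> (forall p q, `|D p q| <= d) -> N%:R * d < `|a| -> u = 0.
Proof.
move=> uD Dd d_small.
pose s := \sum_(q < N) `|u 0 q|.
have s_ge0 : 0 <= s by rewrite sumr_ge0.
have as_le : `|a| * s <= N%:R * d * s.
  rewrite mulr_sumr -[N in N%:R]card_ord -sumr_const !mulr_suml.
  apply: ler_sum => q _; rewrite mul1r.
  have -> : `|a| * `|u 0 q| = `|(u *m D) 0 q| by rewrite uD mxE normrM.
  rewrite mxE (le_trans (ler_norm_sum _ _ _)) // /s mulr_sumr.
  by apply: ler_sum => p _; rewrite normrM mulrC ler_wpM2r.
have s0 : s = 0.
  apply/eqP; rewrite eq_le s_ge0 andbT.
  have gap : 0 < `|a| - N%:R * d by rewrite subr_gt0.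
  by rewrite -(pmulr_rle0 _ gap) mulrBl subr_le0.
apply/rowP => q; rewrite mxE; apply/eqP; rewrite -normr_eq0.
by move/psumr_eq0P: s0 => /(_ (fun q _ => normr_ge0 _) q isT) ->.
Qed.

Lemma perturbed_left_ker_eq0 (K : numFieldType) (N m : nat) (A : 'M[K]_(N, m))
    (B : 'M[K]_(m, N)) (a : K) :
  a != 0 ->
  exists2 eps : K, 0 < eps & forall (A' : 'M[K]_(N, m)) (u : 'rV[K]_N),
    (forall p k, `|A p k - A' p k| <= eps) ->
    u *m A' = 0 -> u *m (A *m B) = a *: u -> u = 0.
Proof.
move=> a_neq0.
pose beta := \sum_k \sum_q `|B k q|.
pose c := N%:R * (m%:R * beta).
have c_ge0 : 0 <= c by rewrite !mulr_ge0 ?sumr_ge0 // => k _; rewrite sumr_ge0.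
have a_gt0 : 0 < `|a| by rewrite normr_gt0.
pose eps := `|a| / (c + 1).
exists eps => [|A' u AA' uA' uAB]; first by rewrite divr_gt0 ?ltr_wpDl.
apply: (@eigen_small_mx_eq0 _ _ u ((A - A') *m B) a (m%:R * (eps * beta))).
- by rewrite mulmxA mulmxBr uA' subr0 -mulmxA.
- move=> p q; rewrite mxE; apply: le_trans (ler_norm_sum _ _ _) _.
  rewrite -[m in m%:R]card_ord -sumr_const mulr_suml; apply: ler_sum => k _.
  by rewrite mul1r !mxE normrM ler_pM ?AA' ?normr_le_sum2.
- have -> : N%:R * (m%:R * (eps * beta)) = `|a| * (c / (c + 1)) by rewrite /c /eps; ring.
  by rewrite gtr_pMr // ltr_pdivrMr ?ltr_wpDl // mul1r ltrDl.
Qed.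

Section QuadraticFormMatrix.
Variables (K : numFieldType) (conj : K -> K) (n m : nat).
Implicit Types (X : 'I_m -> 'cV[K]_n) (S : 'M[K]_n).

Lemma innerDl (u v x : 'cV[K]_n) : inner conj (u + v) x = inner conj u x + inner conj v x.
Proof. by rewrite /inner -big_split; apply: eq_bigr => i _; rewrite mxE mulrDl. Qed.

Lemma innerZl (a : K) (u x : 'cV[K]_n) : inner conj (a *: u) x = a * inner conj u x.
Proof. by rewrite /inner mulr_sumr; apply: eq_bigr => i _; rewrite mxE mulrA. Qed.

Definition qform_fun X (v : 'rV[K]_(n * n)) : 'rV[K]_m :=
  \row_k inner conj (vec_mx v *m X k) (X k).

Fact qform_fun_is_linear X : linear (qform_fun X).
Proof.
by move=> a u v; apply/rowP => k; rewrite !mxE linearP mulmxDl -scalemxAl innerDl innerZl.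
Qed.
HB.instance Definition _ X :=
  GRing.isLinear.Build K _ _ _ (qform_fun X) (qform_fun_is_linear X).

Definition qform_mx X : 'M[K]_(n * n, m) := lin1_mx (qform_fun X).

Lemma mul_qform_mx X S : mxvec S *m qform_mx X = \row_k inner conj (S *m X k) (X k).
Proof. by rewrite mul_rV_lin1 /qform_fun; apply/rowP => k; rewrite !mxE mxvecK. Qed.

Lemma qform_mx_entry X i j k : qform_mx X (mxvec_index i j) k = X k j 0 * conj (X k i 0).
Proof.
rewrite /qform_mx /lin1_mx !mxE vec_mx_delta /inner (bigD1 i) //= big1 ?addr0.
  rewrite mxE (bigD1 j) //= big1 ?addr0; first by rewrite mxE !eqxx mul1r.
  by move=> s /negbTE sj; rewrite mxE sj andbF mul0r.
by move=> r /negbTE ri; rewrite mxE big1 ?mul0r // => s _; rewrite mxE ri mul0r.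
Qed.

End QuadraticFormMatrix.

Lemma frame_dist2_entry (K : numFieldType) (n m : nat) (X Y : 'I_m -> 'cV[K]_n)
    (eps : K) k i :
  0 <= eps -> frame_dist2 X Y < eps ^+ 2 -> `|X k i 0 - Y k i 0| <= eps.
Proof.
move=> eps_ge0 dXY; apply: ltW.
rewrite -(ltr_pXn2r (n := 2)) ?nnegrE ?normr_ge0 //; apply: le_lt_trans dXY.
have -> : `|X k i 0 - Y k i 0| ^+ 2 = `|(X k - Y k) i 0| ^+ 2 by rewrite !mxE.
apply: le_trans (_ : norm2 (X k - Y k) <= _); rewrite /norm2.
  by rewrite (bigD1 i) //= lerDl sumr_ge0 // => i' _; rewrite exprn_ge0.
rewrite /frame_dist2 (bigD1 k) //= lerDl sumr_ge0 // => k' _.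
by rewrite sumr_ge0 // => i' _; rewrite exprn_ge0.
Qed.

Section QuadraticFormContinuity.
Variables (K : numFieldType) (conj : K -> K) (n m : nat).
Hypothesis conjB : forall x y, conj (x - y) = conj x - conj y.
Hypothesis normJ : forall x, `|conj x| = `|x|.

Lemma qform_mx_near (X : 'I_m -> 'cV[K]_n) (delta : K) :
  0 < delta ->
  exists2 eps : K, 0 < eps & forall Y : 'I_m -> 'cV[K]_n,
    frame_dist2 X Y < eps ^+ 2 ->
    forall p k, `|qform_mx conj X p k - qform_mx conj Y p k| <= delta.
Proof.
move=> delta_gt0.
pose M := \sum_k \sum_i `|X k i 0|.
have M_ge0 : 0 <= M by rewrite sumr_ge0 // => k _; rewrite sumr_ge0.
pose c := 2 * M + 1.
have c_gt0 : 0 < c by rewrite ltr_wpDl ?mulr_ge0.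
pose eps := delta / (c + delta).
have cd_gt0 : 0 < c + delta by rewrite addr_gt0.
have eps_gt0 : 0 < eps by rewrite divr_gt0.
have eps_le1 : eps <= 1 by rewrite ler_pdivrMr // mul1r lerDr ltW.
have eps_c : eps * c <= delta.
  by rewrite mulrAC ler_pdivrMr // ler_pM2l // lerDl ltW.
exists eps => // Y dXY p k; case/mxvec_indexP: p => i j.
have XY := frame_dist2_entry _ _ (ltW eps_gt0) dXY.
have XM i' : `|X k i' 0| <= M by apply: (normr_le_sum2 (fun k i => X k i 0)).
rewrite !qform_mx_entry; apply: le_trans eps_c.
set xi := X k i 0; set xj := X k j 0; set yi := Y k i 0; set yj := Y k j 0.
have -> : xj * conj xi - yj * conj yi = (xj - yj) * conj xi + yj * conj (xi - yi).
  by rewrite conjB; ring.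
have yj_le : `|yj| <= M + 1.
  rewrite -[yj](subKr xj) (le_trans (ler_normB _ _)) //.
  by rewrite lerD ?XM ?(le_trans (XY _ _)).
apply: le_trans (ler_normD _ _) _; rewrite !normrM !normJ.
have -> : eps * c = eps * M + (M + 1) * eps by rewrite /c; ring.
by rewrite lerD ?ler_pM ?XY ?XM.
Qed.
End QuadraticFormContinuity.

Lemma injective_frames_open_of_factor (K : numFieldType) (conj : K -> K) (n m : nat)
    (P : 'M[K]_(n * n)) (a : K) :
  (forall x y, conj (x - y) = conj x - conj y) -> (forall x, `|conj x| = `|x|) ->
  a != 0 ->
  (forall X : 'I_m -> 'cV[K]_n, injective_family conj X ->
     forall S, (forall k, inner conj (S *m X k) (X k) = 0) -> mxvec S *m P = 0) ->
  (forall T : 'M[K]_n, adjmx conj T = T -> mxvec T *m P = a *: mxvec T) ->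
  injective_frames_open conj n m.
Proof.
move=> conjB normJ a_neq0 kerP adjP X _ injX.
have [B PAB] : exists B, P = qform_mx conj X *m B.
  apply: mulmx_factor_ker => u; rewrite -[u]vec_mxK mul_qform_mx => /rowP nullS.
  by apply: (kerP X injX) => k; move: (nullS k); rewrite !mxE.
have [delta delta_gt0 kerAB] := perturbed_left_ker_eq0 (qform_mx conj X) B a_neq0.
have [eps eps_gt0 near] := qform_mx_near conjB normJ X delta_gt0.
exists eps; split=> // Y _ dXY T adjT nullT.
apply/eqP; rewrite -mxvec_eq0; apply/eqP.
apply: (kerAB (qform_mx conj Y)); first exact: near.
  by rewrite mul_qform_mx; apply/rowP => k; rewrite !mxE nullT.
by rewrite -PAB adjP.
Qed.

Section Adjoint.
Variables (K : numFieldType) (conj : {rmorphism K -> K}) (n : nat).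
Implicit Types (S T : 'M[K]_n).

Lemma adjmxD S T : adjmx conj (S + T) = adjmx conj S + adjmx conj T.
Proof. by rewrite /adjmx map_mxD linearD. Qed.

Hypothesis conjK : involutive conj.

Lemma adjmxK : involutive (@adjmx K conj n).
Proof. by move=> S; apply/matrixP => i j; rewrite !mxE conjK. Qed.

Lemma inner_adjmx S (x : 'cV[K]_n) :
  inner conj (adjmx conj S *m x) x = conj (inner conj (S *m x) x).
Proof.
rewrite /inner rmorph_sum.
transitivity (\sum_i \sum_j conj (S j i) * x j 0 * conj (x i 0)).
  by apply: eq_bigr => i _; rewrite mxE mulr_suml; apply: eq_bigr => j _; rewrite !mxE.
rewrite exchange_big /=; apply: eq_bigr => j _; rewrite mxE rmorphM rmorph_sum mulr_suml.
by apply: eq_bigr => i _; rewrite !rmorphM /= conjK mulrAC.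
Qed.

Lemma injective_null_form_skew (m : nat) (X : 'I_m -> 'cV[K]_n) S :
  injective_family conj X -> (forall k, inner conj (S *m X k) (X k) = 0) ->
  S + adjmx conj S = 0.
Proof.
move=> injX nullS; apply: injX => [|k]; first by rewrite adjmxD adjmxK addrC.
by rewrite mulmxDl innerDl inner_adjmx nullS rmorph0 addr0.
Qed.

End Adjoint.

Lemma injective_frames_open_id (K : numFieldType) (n m : nat) :
  injective_frames_open (K := K) id n m.
Proof.
have adjmx_id (S : 'M[K]_n) : adjmx id S = S^T by rewrite /adjmx map_mx_id.
apply: (@injective_frames_open_of_factor _ _ _ _ (1%:M + lin_mx trmx) 2) => //.
- by rewrite pnatr_eq0.
- move=> X injX S nullS; rewrite mulmxDr mulmx1 mul_vec_lin -linearD /= -adjmx_id.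
  by apply/eqP; rewrite mxvec_eq0 (injective_null_form_skew (conj := idfun) _ injX nullS).
- move=> T; rewrite adjmx_id mulmxDr mulmx1 mul_vec_lin /= => ->.
  by rewrite scaler_nat mulr2n.
Qed.

Lemma injective_null_form_eq0 (R : rcfType) (n m : nat) (X : 'I_m -> 'cV[R[i]]_n)
    (S : 'M[R[i]]_n) :
  injective_family conjc X -> (forall k, inner conjc (S *m X k) (X k) = 0) -> S = 0.
Proof.
move=> injX nullS.
have skewS := injective_null_form_skew (@conjcK R) injX nullS.
have : 'i *: S + adjmx conjc ('i *: S) = 0.
  apply: (injective_null_form_skew (@conjcK R) injX) => k.
  by rewrite -scalemxAl innerZl nullS mulr0.
have adjmx_iS : adjmx conjc ('i *: S) = - 'i *: adjmx conjc S.
  apply/matrixP => p q; rewrite !mxE rmorphM /=.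
  by congr (_ * _); apply/eqP; rewrite eq_complex /= oppr0 !eqxx.
rewrite adjmx_iS scaleNr -scalerBr => /eqP.
rewrite scaler_eq0 (negbTE (neq0Ci _)) /= => /eqP hermS.
have S2 : 2%:R *: S = 0.
  rewrite scaler_nat mulr2n -{1}(subrK (adjmx conjc S) S) hermS add0r addrC.
  exact: skewS.
by move/eqP: S2; rewrite scaler_eq0 pnatr_eq0 => /eqP.
Qed.

Lemma injective_frames_open_conjc (R : rcfType) (n m : nat) :
  injective_frames_open (@conjc R) n m.
Proof.
apply: (@injective_frames_open_of_factor _ _ _ _ 1%:M 1) => //.
- exact: rmorphB.
- exact: normcJ.
- exact: oner_neq0.
- by move=> X injX S nullS; rewrite (injective_null_form_eq0 injX nullS) raddf0 mul0mx.
- by move=> T _; rewrite mulmx1 scale1r.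
Qed.

Theorem mainTheorem6 (R : realType) (n m : nat) :
  injective_frames_open (K := R) id n m /\
  injective_frames_open (K := R[i]) (@conjc R) n m.
Proof. by split; [exact: injective_frames_open_id | exact: injective_frames_open_conjc]. Qed.
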